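(* Let $h$ be a fixed-point-free isometry of order $3$ of the $E_8$ root lattice. In $E_8\perp E_8$ let $M=\{(x,x):x\in E_8\}$ and $M'=\{(hx,x):x\in E_8\}$. Then $M+M'$ is isometric to $A_2\otimes_{\mathbb Z}E_8$.
   Context: $A_2\otimes E_8$ denotes the tensor product of the root lattices $A_2$ and $E_8$ with the product bilinear form. *)

From HB Require Import structures.
From mathcomp Require Import all_boot all_order all_algebra.
Set Implicit Arguments. Unset Strict Implicit. Unset Printing Implicit Defensive.
Import Order.TTheory GRing.Theory Num.Theory.
Local Open Scope ring_scope.

(* Gram matrix of the E8 root lattice (Cartan matrix, Bourbaki labelling,
   0-indexed): nodes 0..7, edges 0-2, 2-3, 3-4, 4-5, 5-6, 6-7, 1-3.
   The E8 root lattice is modelled as Z^8 = 'rV[int]_8 with this Gram matrix. *)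
Definition e8_edge (i j : nat) : bool :=
  [|| (i == 0%N) && (j == 2%N), (i == 2%N) && (j == 3%N),
      (i == 3%N) && (j == 4%N), (i == 4%N) && (j == 5%N),
      (i == 5%N) && (j == 6%N), (i == 6%N) && (j == 7%N)
    | (i == 1%N) && (j == 3%N)].

Definition E8gram : 'M[int]_8 :=
  \matrix_(i, j) (if i == j then (2 : int)
                  else if e8_edge i j || e8_edge j i then (-1 : int) else (0 : int)).

Definition A2gram : 'M[int]_2 :=
  \matrix_(i, j) (if i == j then (2 : int) else (-1 : int)).

Definition e8form (x y : 'rV[int]_8) : int := (x *m E8gram *m y^T) 0 0.

Definition e8e8form (u v : 'rV[int]_8 * 'rV[int]_8) : int :=
  e8form u.1 v.1 + e8form u.2 v.2.

(* A2 (x)_Z E8 = Z^2 (x) Z^8, modelled as 2x8 integer matrices X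
   (X = sum_{i,j} X i j e_i (x) f_j), with the product bilinear form
   <X, Y> = sum_{i,k,j,l} X i j * Y k l * A2gram i k * E8gram j l
          = tr (X^T A2 Y E8^T). *)
Definition a2e8form (X Y : 'M[int]_(2, 8)) : int :=
  \tr (X^T *m A2gram *m Y *m E8gram^T).

Definition isometric (V W : zmodType)
  (L1 : V -> Prop) (b1 : V -> V -> int) (L2 : W -> Prop) (b2 : W -> W -> int) :=
  exists f : V -> W,
    [/\ (forall x y, L1 x -> L1 y -> f (x + y) = f x + f y),
        (forall x, L1 x -> L2 (f x)),
        (forall x y, L1 x -> L1 y -> f x = f y -> x = y),
        (forall z, L2 z -> exists x, L1 x /\ f x = z)
      & (forall x y, L1 x -> L1 y -> b2 (f x) (f y) = b1 x y)].

(* M = {(x,x)}, M' = {(hx,x)} (h acting on row vectors: hx := x *m h) *)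
Definition diagM (u : 'rV[int]_8 * 'rV[int]_8) : Prop := exists x, u = (x, x).
Definition twistM (h : 'M[int]_8) (u : 'rV[int]_8 * 'rV[int]_8) : Prop :=
  exists x, u = (x *m h, x).
Definition sumL (V : zmodType) (L1 L2 : V -> Prop) (v : V) : Prop :=
  exists a b, L1 a /\ L2 b /\ v = a + b.

Set Warnings "-notation-overridden -ambiguous-paths".
From mathcomp Require Import all_boot all_algebra.
From mathcomp Require Import ring.
Import GRing.Theory.
Local Open Scope ring_scope.

(* Since h is fixed-point free of order 3, it satisfies 1 + h + h^2 = 0.
   Every element (x, x) + (y h, y) of M + M' can be written uniquely as
   (u + v h^2, u + v h), with u = x and v = y h^2, and because h^2 + h = -1
   the E8 _|_ E8 form of two such elements is
   2<u,u'> - <u,v'> - <v,u'> + 2<v,v'>, the A2 (x) E8 form of the 2 x 8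
   matrices with rows u, v and u', v'.  The coordinates (u, v) are recovered
   by a division by 3, since (h^2 - h)^2 = -3. *)

Lemma isometric_of_cancel (V W : zmodType) (L : V -> Prop)
    (b1 : V -> V -> int) (b2 : W -> W -> int) (g : W -> V) (f : V -> W) :
  {morph g : X Y / X + Y} -> (forall X, L (g X)) ->
  (forall v, L v -> exists X, g X = v) -> cancel g f ->
  (forall X Y, b1 (g X) (g Y) = b2 X Y) ->
  isometric L b1 (fun _ => True) b2.
Proof.
move=> gD Lg onto_g gK gb; exists f; split=> //.
- by move=> _ _ /onto_g[X <-] /onto_g[Y <-]; rewrite -gD !gK.
- by move=> _ _ /onto_g[X <-] /onto_g[Y <-]; rewrite !gK => ->.
- by move=> Z _; exists (g Z); rewrite gK.
- by move=> _ _ /onto_g[X <-] /onto_g[Y <-]; rewrite !gK.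
Qed.

Section CubeRootOfUnity.

Variables (R : pzRingType) (w : R).
Hypothesis w_Phi3 : 1 + w + w ^+ 2 = 0.

Let wDw2 : w + w ^+ 2 = -1.
Proof. by apply/eqP; rewrite -addr_eq0 addrC addrA w_Phi3. Qed.

Lemma expr3_Phi3 : w ^+ 3 = 1.
Proof.
rewrite exprS -[w ^+ 2](addKr w) wDw2 mulrDr mulrN1 mulrN -expr2.
by rewrite -opprD addrC wDw2 opprK.
Qed.

Lemma sqr_expr2B_Phi3 : (w ^+ 2 - w) ^+ 2 = - 3%:R.
Proof.
have w4 : w ^+ 4 = w by rewrite exprS expr3_Phi3 mulr1.
rewrite expr2 mulrBl !mulrBr -!exprS -exprSr -exprD -expr2 w4 expr3_Phi3.
by rewrite opprB addrACA wDw2 -!opprD.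
Qed.

End CubeRootOfUnity.

Lemma fixfree_order3_Phi3 {R : pzRingType} {n} (h : 'M[R]_n.+1) :
  h ^+ 3 = 1 -> (forall x : 'rV_n.+1, x *m h = x -> x = 0) ->
  1 + h + h ^+ 2 = 0.
Proof.
move=> h3 fixfree; apply/row_matrixP => i; rewrite row0 rowE; apply: fixfree.
by rewrite -mulmxA !mulmxE !mulrDl mul1r -expr2 -exprSr h3 addrC addrA.
Qed.

Lemma e8formDl (x y z : 'rV[int]_8) : e8form (x + y) z = e8form x z + e8form y z.
Proof. by rewrite /e8form !mulmxDl mxE. Qed.

Lemma e8formDr (x y z : 'rV[int]_8) : e8form x (y + z) = e8form x y + e8form x z.
Proof. by rewrite /e8form linearD mulmxDr mxE. Qed.

Lemma e8formNl (x y : 'rV[int]_8) : e8form (- x) y = - e8form x y.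
Proof. by rewrite /e8form !mulNmx mxE. Qed.

Lemma e8formNr (x y : 'rV[int]_8) : e8form x (- y) = - e8form x y.
Proof. by rewrite /e8form linearN mulmxN mxE. Qed.

Lemma e8form_row (X Y : 'M[int]_(2, 8)) i k :
  e8form (row i X) (row k Y) = (X *m E8gram *m Y^T) i k.
Proof.
by rewrite /e8form tr_row -!row_mul !mxE; apply: eq_bigr => j _; rewrite !mxE.
Qed.

Lemma a2e8formE (X Y : 'M[int]_(2, 8)) :
  let e i k := e8form (row i X) (row k Y) in
  a2e8form X Y =
    2 * e ord0 ord0 - e ord0 ord_max - e ord_max ord0 + 2 * e ord_max ord_max.
Proof.
rewrite /= !e8form_row; set G := X *m E8gram *m Y^T.
have -> : a2e8form X Y = \tr (A2gram *m G^T).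
  by rewrite /a2e8form -!mulmxA mxtrace_mulC /G !trmx_mul trmxK !mulmxA.
clearbody G.
rewrite /mxtrace !big_ord_recl big_ord0 !mxE !big_ord_recl !big_ord0 !mxE /=.
have -> : lift ord0 ord0 = ord_max :> 'I_2 by apply: val_inj.
ring.
Qed.

Lemma a2e8form_col_mx (u v u' v' : 'rV[int]_8) :
  a2e8form (col_mx u v) (col_mx u' v') =
    2 * e8form u u' - e8form u v' - e8form v u' + 2 * e8form v v'.
Proof.
have row0 (x y : 'rV[int]_8) : row ord0 (col_mx x y : 'M_(1 + 1, 8)) = x.
  by rewrite -[RHS](row_id ord0) -(rowKu ord0 x y); congr row; apply: val_inj.
have row1 (x y : 'rV[int]_8) : row ord_max (col_mx x y : 'M_(1 + 1, 8)) = y.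
  by rewrite -[RHS](row_id ord0) -(rowKd ord0 x y); congr row; apply: val_inj.
by rewrite a2e8formE /= !row0 !row1.
Qed.

Lemma map_divz_mx_mulrn m n (d : nat) (A : 'M[int]_(m, n)) :
  d != 0%N -> map_mx (fun z => (z %/ d)%Z) (A *+ d) = A.
Proof.
move=> d_neq0; apply/matrixP => i j.
by rewrite mxE mulmxnE -mulr_natr natz mulzK // eqz_nat.
Qed.

Section EisensteinCoordinates.

Variable h : 'M[int]_8.
Hypothesis h_iso : forall x y : 'rV[int]_8, e8form (x *m h) (y *m h) = e8form x y.
Hypothesis h_Phi3 : 1 + h + h ^+ 2 = 0.

Definition sumM_of_rows (X : 'M[int]_(1 + 1, 8)) : 'rV[int]_8 * 'rV[int]_8 :=
  (usubmx X + dsubmx X *m h ^+ 2, usubmx X + dsubmx X *m h).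

Definition rows_of_sumM (p : 'rV[int]_8 * 'rV[int]_8) : 'M[int]_(1 + 1, 8) :=
  let v := map_mx (fun z => (z %/ 3)%Z) ((p.2 - p.1) *m (h ^+ 2 - h)) in
  col_mx (p.2 - v *m h) v.

Lemma mulmx_expr2_Phi3 (x : 'rV[int]_8) : x *m h ^+ 2 = - x - x *m h.
Proof.
have -> : h ^+ 2 = - (1 + h) by apply/eqP; rewrite -addr_eq0 addrC h_Phi3.
by rewrite mulmxN mulmxDr mulmx1 opprD.
Qed.

Lemma mulmx_expr3_Phi3 (x : 'rV[int]_8) : x *m h ^+ 3 = x.
Proof. by rewrite expr3_Phi3 // mulmx1. Qed.

Lemma sumM_of_rowsD : {morph sumM_of_rows : X Y / X + Y}.
Proof.
move=> X Y; rewrite /sumM_of_rows !linearD /= !mulmxDl.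
by congr pair; rewrite addrACA.
Qed.

Lemma sumM_of_rows_mem X : sumL diagM (twistM h) (sumM_of_rows X).
Proof.
exists (usubmx X, usubmx X), (dsubmx X *m h ^+ 2, dsubmx X *m h).
split; [by exists (usubmx X) | split=> //].
by exists (dsubmx X *m h); rewrite expr2 -mulmxE mulmxA.
Qed.

Lemma sumM_of_rows_onto p :
  sumL diagM (twistM h) p -> exists X, sumM_of_rows X = p.
Proof.
case=> _ [_ [[x ->] [[y ->] ->]]]; exists (col_mx x (y *m h ^+ 2)).
rewrite /sumM_of_rows col_mxKu col_mxKd.
rewrite -[_ *m h ^+ 2 *m h]mulmxA -[_ *m h ^+ 2 *m h ^+ 2]mulmxA.
rewrite !mulmxE -exprSr -exprD (exprD h 3 1) expr1 -mulmxE mulmxA.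
by rewrite !mulmx_expr3_Phi3.
Qed.

Lemma sumM_of_rowsK : cancel sumM_of_rows rows_of_sumM.
Proof.
move=> X; rewrite /rows_of_sumM /sumM_of_rows /=.
set u := usubmx X; set v := dsubmx X.
have -> : u + v *m h - (u + v *m h ^+ 2) = - (v *m (h ^+ 2 - h)).
  by rewrite opprD addrACA subrr add0r mulmxBr opprB.
rewrite mulNmx -mulmxA mulmxE -expr2 sqr_expr2B_Phi3 // mulmxN opprK.
by rewrite raddfMn /= mulmx1 map_divz_mx_mulrn // addrK vsubmxK.
Qed.

Lemma e8e8form_sumM_of_rows X Y :
  e8e8form (sumM_of_rows X) (sumM_of_rows Y) = a2e8form X Y.
Proof.
have iso2 x y : e8form (x *m h ^+ 2) (y *m h ^+ 2) = e8form x y.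
  by rewrite expr2 -mulmxE !mulmxA !h_iso.
rewrite -[in RHS](vsubmxK X) -[in RHS](vsubmxK Y) a2e8form_col_mx.
rewrite /e8e8form /sumM_of_rows /= !e8formDl !e8formDr !iso2 !h_iso.
rewrite !mulmx_expr2_Phi3 !e8formDl !e8formDr !e8formNl !e8formNr.
ring.
Qed.

End EisensteinCoordinates.

Theorem lemma2p7 (h : 'M[int]_8) :
  (forall x y : 'rV[int]_8, e8form (x *m h) (y *m h) = e8form x y) ->
  h ^+ 3 = 1 -> h != 1 ->
  (forall x : 'rV[int]_8, x *m h = x -> x = 0) ->
  isometric (sumL diagM (twistM h)) e8e8form (fun _ : 'M[int]_(2, 8) => True) a2e8form.
Proof.
move=> h_iso h3 _ fixfree.
have h_Phi3 := fixfree_order3_Phi3 h h3 fixfree.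
apply: (@isometric_of_cancel _ _ _ _ _ (sumM_of_rows h) (rows_of_sumM h)).
- exact: sumM_of_rowsD.
- exact: sumM_of_rows_mem.
- exact: sumM_of_rows_onto.
- exact: sumM_of_rowsK.
- exact: e8e8form_sumM_of_rows h_iso h_Phi3.
Qed.
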